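(* Let $\mathbf{k}$ be a commutative ring in which $2$ is invertible and $A$ a $\mathbf{k}$-superalgebra. Then there are equivalences of supercategories $$\mathrm{Mod}(A\otimes_{\mathbf{k}}\mathcal{C}\ell_1)\simeq(\mathrm{Mod}(A)^{ct})^{rev},\qquad \mathrm{Mod}(A\otimes_{\mathbf{k}}\mathcal{C}\ell_1)\simeq\mathrm{Mod}_{\mathrm{super}}(A),\qquad \mathrm{Mod}(A\otimes_{\mathbf{k}}\mathcal{C}\ell_1^-)\simeq(\mathrm{Mod}(A)^{rev})^{ct}.$$
   Context: $\mathcal{C}\ell_1$ is the superalgebra generated by one odd element $C_1$ with $C_1^2=1$; $\mathcal{C}\ell_1^-$ is generated by one odd $C_1$ with $C_1^2=-1$. Tensor products of superalgebras use the sign rule $(a_1\otimes b_1)(a_2\otimes b_2)=(-1)^{|b_1||a_2|}a_1a_2\otimes b_1b_2$. For a superalgebra $B$ with $\phi_B(b)=(-1)^\epsilon b$ on $B_\epsilon$, $\mathrm{Mod}(B)$ is the category of left $B$-modules, a supercategory with $\Pi M=\{\pi(x)\}$, $b\pi(x)=\pi(\phi_B(b)x)$, $\xi_M(\pi\pi(x))=x$; $\mathrm{Mod}_{\mathrm{super}}(B)$ is the category of $B$-supermodules with even morphisms, $\Pi$ the parity shift and the same $\xi$. A supercategory is a $\mathbf{k}$-linear additive category with endofunctor $\Pi$ and $\xi:\Pi^2\xrightarrow\sim\mathrm{id}$, $\xi\Pi=\Pi\xi$; a superfunctor is $(F,\alpha_F)$ with $\alpha_F:F\Pi\xrightarrow\sim\Pi'F$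 and $(\xi'F)(\Pi'\alpha_F)(\alpha_F\Pi)=F\xi$; an equivalence of supercategories is a superfunctor whose functor is an equivalence. $\mathcal{C}^{rev}=(\mathcal{C},\Pi,-\xi)$. The Clifford twist $\mathcal{C}^{ct}$ has objects $(X,\varphi)$, $\varphi:\Pi X\xrightarrow\sim X$ with $\varphi\circ\Pi\varphi=\xi_X$, morphisms $f$ with $f\varphi=\varphi'\Pi f$, $\Pi^{ct}(X,\varphi)=(X,-\varphi)$, $\xi^{ct}=\mathrm{id}$. *)

From Stdlib Require Import ProofIrrelevance FunctionalExtensionality.
From HB Require Import structures.
From mathcomp Require Import all_boot all_algebra.
Set Implicit Arguments. Unset Strict Implicit. Unset Printing Implicit Defensive.
Import GRing.Theory.
Local Open Scope ring_scope.

Lemma sig_ext (T : Type) (P : T -> Prop) (x y : {a | P a}) :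
  proj1_sig x = proj1_sig y -> x = y.
Proof.
case: x => a Pa; case: y => b Pb /= eab; subst b; f_equal; apply: proof_irrelevance.
Qed.

Section Super.
Variable k : comPzRingType.

Record superAlg := SuperAlg {
  sa_car :> lmodType k;
  sa_mul : sa_car -> sa_car -> sa_car;
  sa_one : sa_car;
  sa_ev : sa_car -> sa_car;
  sa_od : sa_car -> sa_car }.

Record is_superalg (A : superAlg) : Prop := IsSuperalg {
  sa_mulA : forall a b c : A, sa_mul a (sa_mul b c) = sa_mul (sa_mul a b) c;
  sa_mul1l : forall a : A, sa_mul (sa_one A) a = a;
  sa_mul1r : forall a : A, sa_mul a (sa_one A) = a;
  sa_mulDl : forall a b x : A, sa_mul (a + b) x = sa_mul a x + sa_mul b x;
  sa_mulZl : forall (c : k) (a x : A), sa_mul (c *: a) x = c *: sa_mul a x;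
  sa_mulDr : forall a b x : A, sa_mul x (a + b) = sa_mul x a + sa_mul x b;
  sa_mulZr : forall (c : k) (a x : A), sa_mul x (c *: a) = c *: sa_mul x a;
  sa_evD : forall a b : A, sa_ev (a + b) = sa_ev a + sa_ev b;
  sa_evZ : forall (c : k) (a : A), sa_ev (c *: a) = c *: sa_ev a;
  sa_odD : forall a b : A, sa_od (a + b) = sa_od a + sa_od b;
  sa_odZ : forall (c : k) (a : A), sa_od (c *: a) = c *: sa_od a;
  sa_evod : forall a : A, sa_ev a + sa_od a = a;
  sa_evev : forall a : A, sa_ev (sa_ev a) = sa_ev a;
  sa_odod : forall a : A, sa_od (sa_od a) = sa_od a;
  sa_evo : forall a : A, sa_ev (sa_od a) = 0;
  sa_ode : forall a : A, sa_od (sa_ev a) = 0;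
  sa_ev1 : sa_ev (sa_one A) = sa_one A;
  sa_m00 : forall a b : A,
    sa_ev (sa_mul (sa_ev a) (sa_ev b)) = sa_mul (sa_ev a) (sa_ev b);
  sa_m01 : forall a b : A,
    sa_od (sa_mul (sa_ev a) (sa_od b)) = sa_mul (sa_ev a) (sa_od b);
  sa_m10 : forall a b : A,
    sa_od (sa_mul (sa_od a) (sa_ev b)) = sa_mul (sa_od a) (sa_ev b);
  sa_m11 : forall a b : A,
    sa_ev (sa_mul (sa_od a) (sa_od b)) = sa_mul (sa_od a) (sa_od b) }.

Definition sphi (A : superAlg) (a : A) : A := sa_ev a - sa_od a.

Record phi_props (A : superAlg) : Prop := PhiProps {
  phiD : forall a b : A, sphi (a + b) = sphi a + sphi b;
  phiZ : forall (c : k) (a : A), sphi (c *: a) = c *: sphi a;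
  phiM : forall a b : A, sphi (sa_mul a b) = sa_mul (sphi a) (sphi b);
  phi1 : sphi (sa_one A) = sa_one A;
  phiK : forall a : A, sphi (sphi a) = a }.

End Super.


Section SuperAlgTheory.
Variables (k : comPzRingType) (A : superAlg k) (HA : is_superalg A).
Local Notation mul := (@sa_mul k A).
Local Notation ev := (@sa_ev k A).
Local Notation od := (@sa_od k A).

Lemma sa_ev0 : ev 0 = 0.
Proof. by have := sa_evZ HA 0 0; rewrite !scale0r. Qed.
Lemma sa_od0 : od 0 = 0.
Proof. by have := sa_odZ HA 0 0; rewrite !scale0r. Qed.
Lemma sa_evN (a : A) : ev (- a) = - ev a.
Proof. by rewrite -scaleN1r sa_evZ // scaleN1r. Qed.
Lemma sa_odN (a : A) : od (- a) = - od a.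
Proof. by rewrite -scaleN1r sa_odZ // scaleN1r. Qed.
Lemma sa_mulNl (a x : A) : mul (- a) x = - mul a x.
Proof. by rewrite -scaleN1r sa_mulZl // scaleN1r. Qed.
Lemma sa_mulNr (a x : A) : mul x (- a) = - mul x a.
Proof. by rewrite -scaleN1r sa_mulZr // scaleN1r. Qed.
Lemma sa_even (x : A) : ev x = x -> sphi x = x.
Proof.
move=> ex; rewrite /sphi; have h := sa_evod HA x; rewrite ex in h.
have h0 : od x = 0 by apply: (@addrI _ x); rewrite addr0.
by rewrite h0 ex subr0.
Qed.
Lemma sa_odd (x : A) : od x = x -> sphi x = - x.
Proof.
move=> ox; rewrite /sphi; have h := sa_evod HA x; rewrite ox in h.
have h0 : ev x = 0 by apply: (@addIr _ x); rewrite add0r.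
by rewrite h0 ox sub0r.
Qed.
Lemma sphiD (a b : A) : sphi (a + b) = sphi a + sphi b.
Proof. by rewrite /sphi sa_evD // sa_odD // opprD addrACA. Qed.
Lemma sphiZ (c : k) (a : A) : sphi (c *: a) = c *: sphi a.
Proof. by rewrite /sphi sa_evZ // sa_odZ // scalerBr. Qed.
Lemma sphiN (a : A) : sphi (- a) = - sphi a.
Proof. by rewrite -scaleN1r sphiZ scaleN1r. Qed.
Lemma sphiK (a : A) : sphi (sphi a) = a.
Proof.
rewrite /sphi sa_evD // sa_odD // sa_evN sa_odN sa_evev // sa_evo // sa_ode //.
by rewrite sa_odod // oppr0 addr0 add0r opprK sa_evod.
Qed.
Lemma sphi1 : sphi (sa_one A) = sa_one A.
Proof. by apply: sa_even; apply: sa_ev1. Qed.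
Lemma sphiM (a b : A) : sphi (mul a b) = mul (sphi a) (sphi b).
Proof.
rewrite -{1}(sa_evod HA a) -{1}(sa_evod HA b).
rewrite !sa_mulDl // !sa_mulDr // !sphiD.
rewrite (sa_even (sa_m00 HA a b)) (sa_odd (sa_m01 HA a b)).
rewrite (sa_odd (sa_m10 HA a b)) (sa_even (sa_m11 HA a b)).
by rewrite /sphi !sa_mulNl !sa_mulNr opprK.
Qed.
Lemma sa_phi : phi_props A.
Proof.
by split; [exact: sphiD | exact: sphiZ | exact: sphiM | exact: sphi1 | exact: sphiK].
Qed.
Lemma sphi_ev (a : A) : sphi (ev a) = ev a.
Proof. by apply: sa_even; apply: sa_evev. Qed.
Lemma sphi_od (a : A) : sphi (od a) = - od a.
Proof. by apply: sa_odd; apply: sa_odod. Qed.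
End SuperAlgTheory.

(* The tensor product A (x)_k Cl_1^s, s = 1 (Cl_1) or s = -1 (Cl_1^-).   *)
(* As a k-module, A (x) Cl = A (x) 1 (+) A (x) C_1 = A * A, the pair     *)
(* (a, b) standing for a (x) 1 + b (x) C_1.  By the sign rule             *)
(*   (a1 (x) 1 + b1 (x) C)(a2 (x) 1 + b2 (x) C)                          *)
(*     = (a1 a2 + s b1 phi(b2)) (x) 1 + (a1 b2 + b1 phi(a2)) (x) C,       *)
(* and |a (x) 1| = |a|, |b (x) C| = |b| + 1.                              *)
Section Tensor.
Variables (k : comPzRingType) (s : k) (A : superAlg k).
Local Notation mul := (@sa_mul k A).
Local Notation ev := (@sa_ev k A).
Local Notation od := (@sa_od k A).

Definition tens_car : lmodType k := (A * A)%type.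
Definition tens_mul (x y : tens_car) : tens_car :=
  (mul x.1 y.1 + s *: mul x.2 (sphi y.2), mul x.1 y.2 + mul x.2 (sphi y.1)).
Definition tens_one : tens_car := (sa_one A, 0).
Definition tens_ev (x : tens_car) : tens_car := (ev x.1, od x.2).
Definition tens_od (x : tens_car) : tens_car := (od x.1, ev x.2).
Definition tens : superAlg k :=
  SuperAlg tens_mul tens_one tens_ev tens_od.

Lemma tens_phiE (x : tens) : sphi x = (sphi x.1, - sphi x.2).
Proof. by case: x => a b; rewrite /sphi /=; congr pair; rewrite opprB. Qed.

Lemma tens_phi (HA : is_superalg A) : phi_props tens.
Proof.
split.
- move=> [a1 b1] [a2 b2]; rewrite !tens_phiE /=.
  by rewrite (sphiD HA) (sphiD HA) opprD.
- move=> c [a b]; rewrite !tens_phiE /=.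
  by rewrite (sphiZ HA) (sphiZ HA) -scalerN.
- move=> [a1 b1] [a2 b2]; rewrite !tens_phiE /=.
  rewrite /tens_mul /=.
  rewrite (sphiD HA) (sphiD HA) (sphiZ HA) !(sphiM HA) !(sphiK HA).
  rewrite !(sa_mulNl HA) !(sa_mulNr HA) !(sphiN HA).
  rewrite (sphiK HA) (sa_mulNr HA).
  by rewrite opprK opprD.
- rewrite /sphi /= /tens_ev /tens_od /tens_one /=.
  have e1 := sa_ev1 HA; have h := sa_evod HA (sa_one A); rewrite e1 in h.
  have -> : sa_od (sa_one A) = 0.
    by apply: (@addrI _ (sa_one A)); rewrite addr0.
  by rewrite (sa_ev0 HA) (sa_od0 HA) e1 subr0.
- by move=> [a b]; rewrite !tens_phiE /= (sphiN HA) !(sphiK HA) opprK.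
Qed.
End Tensor.

Record supercat (k : comPzRingType) := SuperCat {
  Ob : Type;
  Hom : Ob -> Ob -> Type;
  idm : forall X, Hom X X;
  comp : forall X Y Z, Hom Y Z -> Hom X Y -> Hom X Z;
  hadd : forall X Y, Hom X Y -> Hom X Y -> Hom X Y;
  hscale : forall X Y, k -> Hom X Y -> Hom X Y;
  Pi : Ob -> Ob;
  Pim : forall X Y, Hom X Y -> Hom (Pi X) (Pi Y);
  xi : forall X, Hom (Pi (Pi X)) X;
  comp_assoc : forall X Y Z W (h : Hom Z W) (g : Hom Y Z) (f : Hom X Y),
    comp h (comp g f) = comp (comp h g) f;
  comp_idl : forall X Y (f : Hom X Y), comp (idm Y) f = f;
  comp_idr : forall X Y (f : Hom X Y), comp f (idm X) = f;
  comp_addl : forall X Y Z (g g' : Hom Y Z) (f : Hom X Y),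
    comp (hadd g g') f = hadd (comp g f) (comp g' f);
  comp_addr : forall X Y Z (g : Hom Y Z) (f f' : Hom X Y),
    comp g (hadd f f') = hadd (comp g f) (comp g f');
  comp_scalel : forall X Y Z (c : k) (g : Hom Y Z) (f : Hom X Y),
    comp (hscale c g) f = hscale c (comp g f);
  comp_scaler : forall X Y Z (c : k) (g : Hom Y Z) (f : Hom X Y),
    comp g (hscale c f) = hscale c (comp g f);
  hscaleA : forall X Y (a b : k) (f : Hom X Y),
    hscale a (hscale b f) = hscale (a * b) f;
  hscale1 : forall X Y (f : Hom X Y), hscale 1 f = f;
  Pim_id : forall X, Pim (idm X) = idm (Pi X);
  Pim_comp : forall X Y Z (g : Hom Y Z) (f : Hom X Y),
    Pim (comp g f) = comp (Pim g) (Pim f);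
  Pim_add : forall X Y (f g : Hom X Y), Pim (hadd f g) = hadd (Pim f) (Pim g);
  Pim_scale : forall X Y (c : k) (f : Hom X Y), Pim (hscale c f) = hscale c (Pim f)
}.
Arguments Ob {k} s.
Arguments Hom {k} s X Y.
Arguments idm {k s X}.
Arguments comp {k s X Y Z}.
Arguments hadd {k s X Y}.
Arguments hscale {k s X Y}.
Arguments Pi {k s}.
Arguments Pim {k s X Y}.
Arguments xi {k s}.

Definition is_iso (k : comPzRingType) (C : supercat k) (X Y : Ob C)
  (f : Hom C X Y) : Prop :=
  exists g : Hom C Y X, comp g f = idm /\ comp f g = idm.

Record is_superequiv (k : comPzRingType) (C D : supercat k)
  (F0 : Ob C -> Ob D) (F1 : forall X Y, Hom C X Y -> Hom D (F0 X) (F0 Y))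
  (alpha : forall X, Hom D (F0 (Pi X)) (Pi (F0 X))) : Prop := IsSuperequiv {
  sf_id : forall X, F1 X X idm = idm;
  sf_comp : forall X Y Z (g : Hom C Y Z) (f : Hom C X Y),
    F1 X Z (comp g f) = comp (F1 Y Z g) (F1 X Y f);
  sf_add : forall X Y (f g : Hom C X Y), F1 X Y (hadd f g) = hadd (F1 X Y f) (F1 X Y g);
  sf_scale : forall X Y (c : k) (f : Hom C X Y),
    F1 X Y (hscale c f) = hscale c (F1 X Y f);
  sf_nat : forall X Y (f : Hom C X Y),
    comp (alpha Y) (F1 (Pi X) (Pi Y) (Pim f)) = comp (Pim (F1 X Y f)) (alpha X);
  sf_iso : forall X, is_iso (alpha X);
  sf_coh : forall X,
    comp (xi (F0 X)) (comp (Pim (alpha X)) (alpha (Pi X)))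
    = F1 (Pi (Pi X)) X (xi X);
  sf_faithful : forall X Y (f g : Hom C X Y), F1 X Y f = F1 X Y g -> f = g;
  sf_full : forall X Y (h : Hom D (F0 X) (F0 Y)), exists f, F1 X Y f = h;
  sf_esurj : forall Y : Ob D, exists X : Ob C, exists h : Hom D (F0 X) Y, is_iso h
}.

Definition superequivalent (k : comPzRingType) (C D : supercat k) : Prop :=
  exists (F0 : Ob C -> Ob D)
         (F1 : forall X Y, Hom C X Y -> Hom D (F0 X) (F0 Y))
         (alpha : forall X, Hom D (F0 (Pi X)) (Pi (F0 X))),
    is_superequiv F1 alpha.

Definition revC (k : comPzRingType) (C : supercat k) : supercat k :=
  @SuperCat k (Ob C) (Hom C) (@idm k C) (@comp k C) (@hadd k C) (@hscale k C)
    (@Pi k C) (@Pim k C) (fun X => hscale (-1) (xi X))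
    (@comp_assoc k C) (@comp_idl k C) (@comp_idr k C) (@comp_addl k C)
    (@comp_addr k C) (@comp_scalel k C) (@comp_scaler k C) (@hscaleA k C)
    (@hscale1 k C) (@Pim_id k C) (@Pim_comp k C) (@Pim_add k C) (@Pim_scale k C).

Section CliffordTwist.
Variables (k : comPzRingType) (C : supercat k).

Definition ct_ok (X : Ob C) (p : Hom C (Pi X) X) : Prop :=
  is_iso p /\ comp p (Pim p) = xi X.
Definition ct_ob := {X : Ob C & {p : Hom C (Pi X) X | ct_ok p}}.
Definition ct_base (O : ct_ob) : Ob C := projT1 O.
Definition ct_phi (O : ct_ob) : Hom C (Pi (ct_base O)) (ct_base O) :=
  proj1_sig (projT2 O).
Definition ct_hom (O O' : ct_ob) :=
  {f : Hom C (ct_base O) (ct_base O') | comp f (ct_phi O) = comp (ct_phi O') (Pim f)}.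

Lemma hscaleNN (X Y : Ob C) (f : Hom C X Y) : hscale (-1) (hscale (-1) f) = f.
Proof. by rewrite hscaleA mulrNN mulr1 hscale1. Qed.

Lemma ct_ok_neg (X : Ob C) (p : Hom C (Pi X) X) :
  ct_ok p -> ct_ok (hscale (-1) p).
Proof.
case=> [[g [h1 h2]] h3]; split.
  exists (hscale (-1) g).
  by rewrite !comp_scalel !comp_scaler !hscaleNN h1 h2.
by rewrite Pim_scale comp_scalel comp_scaler hscaleNN.
Qed.

Definition ct_Pi (O : ct_ob) : ct_ob :=
  existT _ (ct_base O)
    (exist _ (hscale (-1) (ct_phi O)) (ct_ok_neg (proj2_sig (projT2 O)))).

Definition ct_idm (O : ct_ob) : ct_hom O O.
Proof. by exists idm; rewrite Pim_id comp_idl comp_idr. Defined.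

Definition ct_comp (O1 O2 O3 : ct_ob) (g : ct_hom O2 O3) (f : ct_hom O1 O2) :
  ct_hom O1 O3.
Proof.
exists (comp (proj1_sig g) (proj1_sig f)).
rewrite -comp_assoc (proj2_sig f) comp_assoc (proj2_sig g).
by rewrite -comp_assoc Pim_comp.
Defined.

Definition ct_hadd (O O' : ct_ob) (f g : ct_hom O O') : ct_hom O O'.
Proof.
exists (hadd (proj1_sig f) (proj1_sig g)).
by rewrite comp_addl Pim_add comp_addr (proj2_sig f) (proj2_sig g).
Defined.

Definition ct_hscale (O O' : ct_ob) (c : k) (f : ct_hom O O') : ct_hom O O'.
Proof.
exists (hscale c (proj1_sig f)).
by rewrite comp_scalel Pim_scale comp_scaler (proj2_sig f).
Defined.

Definition ct_Pim (O O' : ct_ob) (f : ct_hom O O') : ct_hom (ct_Pi O) (ct_Pi O').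
Proof.
exists (proj1_sig f); rewrite /ct_Pi /ct_phi /=.
by rewrite comp_scaler comp_scalel (proj2_sig f).
Defined.

Definition ct_xi (O : ct_ob) : ct_hom (ct_Pi (ct_Pi O)) O.
Proof.
exists idm; rewrite /ct_Pi /ct_phi /=.
by rewrite hscaleNN Pim_id comp_idl comp_idr.
Defined.

Definition ct : supercat k.
Proof.
refine (@SuperCat k ct_ob ct_hom ct_idm ct_comp ct_hadd ct_hscale
          ct_Pi ct_Pim ct_xi _ _ _ _ _ _ _ _ _ _ _ _ _).
- by move=> *; apply: sig_ext; rewrite /= comp_assoc.
- by move=> *; apply: sig_ext; rewrite /= comp_idl.
- by move=> *; apply: sig_ext; rewrite /= comp_idr.
- by move=> *; apply: sig_ext; rewrite /= comp_addl.
- by move=> *; apply: sig_ext; rewrite /= comp_addr.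
- by move=> *; apply: sig_ext; rewrite /= comp_scalel.
- by move=> *; apply: sig_ext; rewrite /= comp_scaler.
- by move=> *; apply: sig_ext; rewrite /= hscaleA.
- by move=> *; apply: sig_ext; rewrite /= hscale1.
- by move=> *; apply: sig_ext.
- by move=> *; apply: sig_ext.
- by move=> *; apply: sig_ext.
- by move=> *; apply: sig_ext.
Defined.
End CliffordTwist.

(* Pi M = {pi(x)} with b pi(x) = pi(phi_B(b) x) (modelled on the same     *)
Section Modules.
Variables (k : comPzRingType) (B : superAlg k) (HB : phi_props B).

Record is_module (M : lmodType k) (act : B -> M -> M) : Prop := IsModule {
  act_addl : forall (a b : B) (m : M), act (a + b) m = act a m + act b m;
  act_scalel : forall (c : k) (a : B) (m : M), act (c *: a) m = c *: act a m;
  act_addr : forall (a : B) (m n : M), act a (m + n) = act a m + act a n;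
  act_scaler : forall (c : k) (a : B) (m : M), act a (c *: m) = c *: act a m;
  act_mul : forall (a b : B) (m : M), act (sa_mul a b) m = act a (act b m);
  act_one : forall m : M, act (sa_one B) m = m }.

Record smodule := SModule {
  sm_car :> lmodType k;
  sm_act : B -> sm_car -> sm_car;
  sm_ax : is_module sm_act }.

Definition is_mhom (M N : smodule) (f : M -> N) : Prop :=
  [/\ forall x y : M, f (x + y) = f x + f y,
      forall (c : k) (x : M), f (c *: x) = c *: f x
    & forall (b : B) (x : M), f (sm_act b x) = sm_act b (f x)].

Definition mhom (M N : smodule) := {f : M -> N | is_mhom f}.

Definition mhom_id (M : smodule) : mhom M M.
Proof. by exists id. Defined.

Definition mhom_comp (M N P : smodule) (g : mhom N P) (f : mhom M N) : mhom M P.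
Proof.
exists (fun x => proj1_sig g (proj1_sig f x)).
case: (proj2_sig f) => f1 f2 f3; case: (proj2_sig g) => g1 g2 g3.
by split=> *; rewrite ?f1 ?g1 ?f2 ?g2 ?f3 ?g3.
Defined.

Definition mhom_add (M N : smodule) (f g : mhom M N) : mhom M N.
Proof.
exists (fun x => proj1_sig f x + proj1_sig g x).
case: (proj2_sig f) => f1 f2 f3; case: (proj2_sig g) => g1 g2 g3.
split=> *; first by rewrite f1 g1 addrACA.
  by rewrite f2 g2 scalerDr.
by rewrite f3 g3 (act_addr (sm_ax N)).
Defined.

Definition mhom_scale (M N : smodule) (c : k) (f : mhom M N) : mhom M N.
Proof.
exists (fun x => c *: proj1_sig f x).
case: (proj2_sig f) => f1 f2 f3.
split=> *; first by rewrite f1 scalerDr.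
  by rewrite f2 !scalerA mulrC.
by rewrite f3 (act_scaler (sm_ax N)).
Defined.

Lemma Pi_module_ax (M : smodule) :
  is_module (fun b : B => sm_act (sphi b) : M -> M).
Proof.
case: (sm_ax M) => h1 h2 h3 h4 h5 h6; split=> *.
- by rewrite (phiD HB) h1.
- by rewrite (phiZ HB) h2.
- by rewrite h3.
- by rewrite h4.
- by rewrite (phiM HB) h5.
- by rewrite (phi1 HB) h6.
Qed.

Definition Pi_mod (M : smodule) : smodule := SModule (Pi_module_ax M).

Definition Pi_mhom (M N : smodule) (f : mhom M N) : mhom (Pi_mod M) (Pi_mod N).
Proof.
exists (proj1_sig f).
by case: (proj2_sig f) => f1 f2 f3; split=> *; rewrite ?f1 ?f2 ?f3.
Defined.

Definition xi_mhom (M : smodule) : mhom (Pi_mod (Pi_mod M)) M.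
Proof.
exists (fun x : M => x); split=> // b x /=.
by rewrite (phiK HB).
Defined.

Definition ModCat : supercat k.
Proof.
refine (@SuperCat k smodule mhom mhom_id mhom_comp mhom_add mhom_scale
          Pi_mod Pi_mhom xi_mhom _ _ _ _ _ _ _ _ _ _ _ _ _).
- by move=> *; apply: sig_ext.
- by move=> *; apply: sig_ext.
- by move=> *; apply: sig_ext.
- by move=> *; apply: sig_ext.
- move=> X Y Z g f f'; apply: sig_ext; apply: functional_extensionality => x /=.
  by case: (proj2_sig g) => g1 _ _; rewrite g1.
- by move=> *; apply: sig_ext.
- move=> X Y Z c g f; apply: sig_ext; apply: functional_extensionality => x /=.
  by case: (proj2_sig g) => _ g2 _; rewrite g2.
- move=> X Y a b f; apply: sig_ext; apply: functional_extensionality => x /=.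
  by rewrite scalerA.
- move=> X Y f; apply: sig_ext; apply: functional_extensionality => x /=.
  by rewrite scale1r.
- by move=> *; apply: sig_ext.
- by move=> *; apply: sig_ext.
- by move=> *; apply: sig_ext.
- by move=> *; apply: sig_ext.
Defined.
End Modules.

Section SuperModules.
Variables (k : comPzRingType) (A : superAlg k) (HA : is_superalg A).
Local Notation HP := (sa_phi HA).

Record is_supmod (M : smodule A) (ev od : M -> M) : Prop := IsSupmod {
  sm_evD : forall x y : M, ev (x + y) = ev x + ev y;
  sm_evZ : forall (c : k) (x : M), ev (c *: x) = c *: ev x;
  sm_odD : forall x y : M, od (x + y) = od x + od y;
  sm_odZ : forall (c : k) (x : M), od (c *: x) = c *: od x;
  sm_evod : forall x : M, ev x + od x = x;
  sm_evev : forall x : M, ev (ev x) = ev x;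
  sm_odod : forall x : M, od (od x) = od x;
  sm_evo : forall x : M, ev (od x) = 0;
  sm_ode : forall x : M, od (ev x) = 0;
  sm_a00 : forall (a : A) (x : M),
    ev (sm_act (sa_ev a) (ev x)) = sm_act (sa_ev a) (ev x);
  sm_a01 : forall (a : A) (x : M),
    od (sm_act (sa_ev a) (od x)) = sm_act (sa_ev a) (od x);
  sm_a10 : forall (a : A) (x : M),
    od (sm_act (sa_od a) (ev x)) = sm_act (sa_od a) (ev x);
  sm_a11 : forall (a : A) (x : M),
    ev (sm_act (sa_od a) (od x)) = sm_act (sa_od a) (od x) }.

Record supmod := SupMod {
  su_mod :> smodule A;
  su_ev : su_mod -> su_mod;
  su_od : su_mod -> su_mod;
  su_ax : is_supmod su_ev su_od }.

Definition is_even (M N : supmod) (f : mhom M N) : Prop :=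
  (forall x : M, su_ev x = x -> su_ev (proj1_sig f x) = proj1_sig f x) /\
  (forall x : M, su_od x = x -> su_od (proj1_sig f x) = proj1_sig f x).

Definition shom (M N : supmod) := {f : mhom M N | is_even f}.

Definition shom_id (M : supmod) : shom M M.
Proof. by exists (mhom_id M). Defined.

Definition shom_comp (M N P : supmod) (g : shom N P) (f : shom M N) : shom M P.
Proof.
exists (mhom_comp (proj1_sig g) (proj1_sig f)).
case: (proj2_sig f) => f1 f2; case: (proj2_sig g) => g1 g2.
by split=> x hx /=; [rewrite g1 // f1 | rewrite g2 // f2].
Defined.

Definition shom_add (M N : supmod) (f g : shom M N) : shom M N.
Proof.
exists (mhom_add (proj1_sig f) (proj1_sig g)).
case: (proj2_sig f) => f1 f2; case: (proj2_sig g) => g1 g2.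
by split=> x hx /=;
  [rewrite (sm_evD (su_ax N)) f1 ?g1 | rewrite (sm_odD (su_ax N)) f2 ?g2].
Defined.

Definition shom_scale (M N : supmod) (c : k) (f : shom M N) : shom M N.
Proof.
exists (mhom_scale c (proj1_sig f)).
case: (proj2_sig f) => f1 f2.
by split=> x hx /=; [rewrite (sm_evZ (su_ax N)) f1 | rewrite (sm_odZ (su_ax N)) f2].
Defined.

Lemma act_N (M : smodule A) (a : A) (x : M) : sm_act (- a) x = - sm_act a x.
Proof. by rewrite -scaleN1r (act_scalel (sm_ax M)) scaleN1r. Qed.

Lemma Pi_supmod_ax (M : supmod) :
  @is_supmod (Pi_mod HP M) (su_od (s:=M)) (su_ev (s:=M)).
Proof.
case: (su_ax M) => h1 h2 h3 h4 h5 h6 h7 h8 h9 h10 h11 h12 h13.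
split=> //= [x|a x|a x|a x|a x].
- by rewrite addrC h5.
- by rewrite (sphi_ev HA) h11.
- by rewrite (sphi_ev HA) h10.
- by rewrite (sphi_od HA) !act_N -scaleN1r h2 h13.
- by rewrite (sphi_od HA) !act_N -scaleN1r h4 h12.
Qed.

Definition Pi_sup (M : supmod) : supmod := SupMod (Pi_supmod_ax M).

Definition Pi_shom (M N : supmod) (f : shom M N) : shom (Pi_sup M) (Pi_sup N).
Proof.
exists (Pi_mhom HP (proj1_sig f)).
by case: (proj2_sig f) => f1 f2; split=> x hx /=; [rewrite f2 | rewrite f1].
Defined.

Definition xi_shom (M : supmod) : shom (Pi_sup (Pi_sup M)) M.
Proof. by exists (xi_mhom HP M). Defined.

Definition ModSuperCat : supercat k.
Proof.
refine (@SuperCat k supmod shom shom_id shom_comp shom_add shom_scale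
          Pi_sup Pi_shom xi_shom _ _ _ _ _ _ _ _ _ _ _ _ _).
- by move=> *; do 2 apply: sig_ext.
- by move=> *; do 2 apply: sig_ext.
- by move=> *; do 2 apply: sig_ext.
- by move=> *; do 2 apply: sig_ext.
- move=> X Y Z g f f'; do 2 apply: sig_ext; apply: functional_extensionality => x /=.
  by case: (proj2_sig (proj1_sig g)) => g1 _ _; rewrite g1.
- by move=> *; do 2 apply: sig_ext.
- move=> X Y Z c g f; do 2 apply: sig_ext; apply: functional_extensionality => x /=.
  by case: (proj2_sig (proj1_sig g)) => _ g2 _; rewrite g2.
- move=> X Y a b f; do 2 apply: sig_ext; apply: functional_extensionality => x /=.
  by rewrite scalerA.
- move=> X Y f; do 2 apply: sig_ext; apply: functional_extensionality => x /=.
  by rewrite scale1r.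
- by move=> *; do 2 apply: sig_ext.
- by move=> *; do 2 apply: sig_ext.
- by move=> *; do 2 apply: sig_ext.
- by move=> *; do 2 apply: sig_ext.
Defined.
End SuperModules.

(* A module over A (x) Cl_1^s (s = 1 or -1) is the same thing as an A-module M
   together with the action c of 1 (x) C_1: by the sign rule c is an A-linear map
   Pi M -> M, and c o Pi c = s.  Restriction along a |-> a (x) 1 therefore
   identifies A (x) Cl_1^s-modules with objects (M, c) of a Clifford twist; the
   parity shift of A (x) Cl_1^s replaces c by -c, which is Pi^ct, and c itself is
   the isomorphism alpha : F Pi ~> Pi^ct F.  Since c o (-c) = -s, the coherence of
   alpha forces the target's xi to be -s: this is (Mod(A)^ct)^rev for s = 1, and
   for s = -1 the twist of Mod(A)^rev, whose objects satisfy c o Pi c = -xi.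
   When 2 is invertible and s = 1, c is an involution commuting with A_0 and
   anticommuting with A_1, so its eigenspace projections (1 +- c)/2 make M an
   A-supermodule; conversely the operator ev - od of a supermodule is such a c. *)

From Pilot Require Import Defs.
From Stdlib Require Import FunctionalExtensionality.
From HB Require Import structures.
From mathcomp Require Import all_boot all_algebra.
Set Implicit Arguments. Unset Strict Implicit. Unset Printing Implicit Defensive.
Import GRing.Theory.
Local Open Scope ring_scope.

Lemma act0l (k : comPzRingType) (B : superAlg k) (M : smodule B) (x : M) :
  sm_act (0 : B) x = 0.
Proof. by have := act_scalel (sm_ax M) 0 0 x; rewrite !scale0r. Qed.

Lemma actNl (k : comPzRingType) (B : superAlg k) (M : smodule B) (b : B) (x : M) :
  sm_act (- b) x = - sm_act b x.
Proof. by rewrite -scaleN1r (act_scalel (sm_ax M)) scaleN1r. Qed.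

Lemma actNr (k : comPzRingType) (B : superAlg k) (M : smodule B) (b : B) (x : M) :
  sm_act b (- x) = - sm_act b x.
Proof. by rewrite -scaleN1r (act_scaler (sm_ax M)) scaleN1r. Qed.

Ltac mhom_ext := apply: sig_ext; apply: functional_extensionality => ? /=.
Ltac sub_mhom_ext := apply: sig_ext; mhom_ext.

Section CliffordModules.
Variables (k : comPzRingType) (A : superAlg k) (HA : is_superalg A).
Local Notation HP := (sa_phi HA).
Local Notation C := (ModCat HP).
Local Notation mul := (@sa_mul k A).
Local Notation one := (sa_one A).

Lemma sa_mul0l (x : A) : mul 0 x = 0.
Proof. by have := sa_mulZl HA 0 0 x; rewrite !scale0r. Qed.

Lemma sa_mul0r (x : A) : mul x 0 = 0.
Proof. by have := sa_mulZr HA 0 0 x; rewrite !scale0r. Qed.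

Lemma sphi0 : sphi (0 : A) = 0.
Proof. by have := sphiZ HA 0 0; rewrite !scale0r. Qed.

Section Sign.
Variable s : k.
Local Notation T := (tens s A).
Local Notation HT := (tens_phi s HA).

(* [tpair a b] is [a (x) 1 + b (x) C_1]; [gen] is [1 (x) C_1]. *)
Definition tpair (a b : A) : T := (a, b).
Local Notation gen := (tpair 0 one).

Lemma tpairD a b c d : tpair a b + tpair c d = tpair (a + c) (b + d).
Proof. by []. Qed.

Lemma tpairZ (c : k) a b : c *: tpair a b = tpair (c *: a) (c *: b).
Proof. by []. Qed.

Lemma tmul_tpair0 a b : sa_mul (tpair a 0) (tpair b 0) = tpair (mul a b) 0.
Proof. by rewrite /= /tens_mul /= sphi0 !sa_mul0r sa_mul0l scaler0 !addr0. Qed.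

Lemma tmul_tpair0_gen a : sa_mul (tpair a 0) gen = tpair 0 a.
Proof.
by rewrite /= /tens_mul /= sphi0 !sa_mul0r sa_mul0l scaler0 !addr0 (sa_mul1r HA).
Qed.

Lemma tmul_gen_tpair0 a : sa_mul gen (tpair a 0) = tpair 0 (sphi a).
Proof.
by rewrite /= /tens_mul /= sphi0 !sa_mul0r !sa_mul0l scaler0 addr0 add0r (sa_mul1l HA).
Qed.

Lemma tmul_gen_gen : sa_mul gen gen = s *: sa_one T.
Proof.
rewrite /= /tens_mul /= sphi0 !sa_mul0r !sa_mul0l (sphi1 HA) (sa_mul1l HA).
by rewrite add0r addr0 /tens_one tpairZ scaler0.
Qed.

Lemma tphi_tpair0 a : sphi (tpair a 0) = tpair (sphi a) 0.
Proof. by rewrite tens_phiE /= sphi0 oppr0. Qed.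

Lemma tphi_gen : sphi gen = - gen.
Proof. by rewrite tens_phiE /= sphi0 (sphi1 HA) -[RHS]scaleN1r tpairZ scaler0 scaleN1r. Qed.

Lemma tpair_decomp a b : tpair a b = tpair a 0 + sa_mul (tpair b 0) gen.
Proof. by rewrite tmul_tpair0_gen tpairD addr0 add0r. Qed.

Section Restriction.
Variable M : smodule T.

Definition res_act (a : A) (x : M) : M := sm_act (tpair a 0) x.
Definition cliff (x : M) : M := sm_act gen x.

Lemma act_tpair a b (x : M) : sm_act (tpair a b) x = res_act a x + res_act b (cliff x).
Proof. by rewrite {1}tpair_decomp (act_addl (sm_ax M)) (act_mul (sm_ax M)). Qed.

Lemma cliff_res_act a (x : M) : cliff (res_act a x) = res_act (sphi a) (cliff x).
Proof. by rewrite /cliff /res_act -!(act_mul (sm_ax M)) tmul_gen_tpair0 tmul_tpair0_gen. Qed.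

Lemma cliff_cliff (x : M) : cliff (cliff x) = s *: x.
Proof.
by rewrite /cliff -(act_mul (sm_ax M)) tmul_gen_gen (act_scalel (sm_ax M)) (act_one (sm_ax M)).
Qed.

Lemma cliffD (x y : M) : cliff (x + y) = cliff x + cliff y.
Proof. exact: (act_addr (sm_ax M)). Qed.

Lemma cliffZ c (x : M) : cliff (c *: x) = c *: cliff x.
Proof. exact: (act_scaler (sm_ax M)). Qed.

Lemma cliffN (x : M) : cliff (- x) = - cliff x.
Proof. exact: actNr. Qed.

Lemma res_actNl a (x : M) : res_act (- a) x = - res_act a x.
Proof. by rewrite /res_act -actNl -[in RHS]scaleN1r tpairZ scaler0 scaleN1r. Qed.

Lemma res_actNr a (x : M) : res_act a (- x) = - res_act a x.
Proof. exact: actNr. Qed.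

Lemma res_module : is_module res_act.
Proof.
split=> [a b x|c a x|a x y|c a x|a b x|x].
- by rewrite /res_act -(act_addl (sm_ax M)) tpairD addr0.
- by rewrite /res_act -(act_scalel (sm_ax M)) tpairZ scaler0.
- exact: (act_addr (sm_ax M)).
- exact: (act_scaler (sm_ax M)).
- by rewrite /res_act -(act_mul (sm_ax M)) tmul_tpair0.
- exact: (act_one (sm_ax M)).
Qed.

Definition res : smodule A := SModule res_module.
End Restriction.

Lemma res_act_Pi (M : smodule T) a (x : M) :
  res_act (M := Pi_mod HT M) a x = res_act (M := M) (sphi a) x.
Proof. by rewrite /res_act /= tphi_tpair0. Qed.

Lemma cliff_Pi (M : smodule T) (x : M) : cliff (M := Pi_mod HT M) x = - cliff (M := M) x.
Proof. by rewrite /cliff /= tphi_gen actNl. Qed.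

Lemma mhom_cliff (M N : smodule T) (f : mhom M N) x :
  proj1_sig f (cliff x) = cliff (proj1_sig f x).
Proof. by case: (proj2_sig f) => _ _ fact; rewrite /cliff fact. Qed.

Definition res_hom (M N : smodule T) (f : mhom M N) : mhom (res M) (res N).
Proof.
exists (proj1_sig f); case: (proj2_sig f) => fD fZ fact; split=> //.
by move=> a x; rewrite /= /res_act fact.
Defined.

Definition lift_hom (M N : smodule T) (g : mhom (res M) (res N))
  (g_cliff : forall x, proj1_sig g (cliff x) = cliff (proj1_sig g x)) : mhom M N.
Proof.
exists (proj1_sig g); case: (proj2_sig g) => gD gZ gact; split=> //.
move=> [a b] x; rewrite -/(tpair a b) !act_tpair gD -g_cliff.
by congr (_ + _); apply: gact.
Defined.

Definition cliff_hom (M : smodule T) : mhom (Pi_mod HP (res M)) (res M).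
Proof.
exists (@cliff M); split; [exact: cliffD | exact: cliffZ |].
by move=> b x /=; rewrite cliff_res_act (sphiK HA).
Defined.

Definition scaled_cliff_hom (M : smodule T) : mhom (res M) (Pi_mod HP (res M)).
Proof.
exists (fun x => s *: @cliff M x); split.
- by move=> x y; rewrite cliffD scalerDr.
- by move=> c x; rewrite cliffZ !scalerA mulrC.
- by move=> b x /=; rewrite cliff_res_act (act_scaler (res_module M)).
Defined.

Definition cliff_alpha (M : smodule T) : mhom (res (Pi_mod HT M)) (res M).
Proof.
exists (@cliff M); split; [exact: (@cliffD M) | exact: (@cliffZ M) |].
by move=> b x /=; rewrite tphi_tpair0 -/(res_act _ _) cliff_res_act (sphiK HA).
Defined.

Definition scaled_cliff_alpha (M : smodule T) : mhom (res M) (res (Pi_mod HT M)).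
Proof.
exists (fun x => s *: @cliff M x); split.
- by move=> x y; rewrite cliffD scalerDr.
- by move=> c x; rewrite cliffZ !scalerA mulrC.
- by move=> b x /=; rewrite tphi_tpair0 cliff_res_act /res_act (act_scaler (sm_ax M)).
Defined.

Lemma cliff_hom_sq (M : smodule T) :
  Defs.comp (s := C) (cliff_hom M) (Pim (s := C) (cliff_hom M))
  = hscale s (xi (s := C) (res M)).
Proof. by mhom_ext; rewrite cliff_cliff. Qed.

Lemma ct_hom_cliff (M N : smodule T) (g : mhom (res M) (res N)) :
  Defs.comp (s := C) g (cliff_hom M) = Defs.comp (s := C) (cliff_hom N) (Pim (s := C) g) ->
  forall x, proj1_sig g (cliff x) = cliff (proj1_sig g x).
Proof. by move=> e x; have := f_equal (fun h => proj1_sig h x) e. Qed.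

Section Involutive.
Hypothesis s2 : s * s = 1.

Lemma cliff_hom_iso (M : smodule T) : is_iso (C := C) (cliff_hom M).
Proof.
by exists (scaled_cliff_hom M); split; mhom_ext;
  rewrite ?cliffZ cliff_cliff scalerA s2 scale1r.
Qed.
End Involutive.

(* An odd operator [p] with [p^2 = s] is exactly a [C_1]-action. *)
Section Clifford.
Variables (N : smodule A) (p : mhom (Pi_mod HP N) N).
Hypothesis pp : forall x, proj1_sig p (proj1_sig p x) = s *: x.
Local Notation pf := (proj1_sig p).

Lemma p_act_sphi a (x : N) : pf (sm_act a x) = sm_act (sphi a) (pf x).
Proof. by case: (proj2_sig p) => _ _ p_act; rewrite -p_act /= (sphiK HA). Qed.

Definition clifford_act (b : T) (x : N) : N := sm_act b.1 x + sm_act b.2 (pf x).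

Lemma clifford_module : is_module clifford_act.
Proof.
have [aD aZ aDr aZr aM a1] := sm_ax N; case: (proj2_sig p) => pD pZ _.
split=> [[a1' b1] [a2 b2] x|c [a b] x|[a b] x y|c [a b] x|[a1' b1] [a2 b2] x|x];
  rewrite /clifford_act /=.
- by rewrite !aD addrACA.
- by rewrite !aZ scalerDr.
- by rewrite pD !aDr addrACA.
- by rewrite pZ !aZr scalerDr.
- rewrite /tens_mul /= !aD aZ !aM pD !p_act_sphi pp !aZr !aDr !aZr.
  by rewrite addrACA [X in _ + X]addrC.
- by rewrite a1 act0l addr0.
Qed.

Definition clifford_mod : smodule T := SModule clifford_module.

Lemma res_act_clifford a (x : clifford_mod) : res_act a x = sm_act a (x : N).
Proof. by rewrite /res_act /= /clifford_act /= act0l addr0. Qed.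

Lemma cliff_clifford (x : clifford_mod) : cliff x = pf x.
Proof. by rewrite /cliff /= /clifford_act /= act0l add0r (act_one (sm_ax N)). Qed.

Definition res_clifford_to : mhom (res clifford_mod) N.
Proof. by exists id; split=> // a x; exact: res_act_clifford. Defined.

Definition res_clifford_from : mhom N (res clifford_mod).
Proof. by exists id; split=> // a x; symmetry; exact: res_act_clifford. Defined.

Lemma res_clifford_to_cliff :
  Defs.comp (s := C) res_clifford_to (cliff_hom clifford_mod)
  = Defs.comp (s := C) p (Pim (s := C) res_clifford_to).
Proof. by mhom_ext; exact: cliff_clifford. Qed.

Lemma res_clifford_from_cliff :
  Defs.comp (s := C) res_clifford_from p
  = Defs.comp (s := C) (cliff_hom clifford_mod) (Pim (s := C) res_clifford_from).
Proof. by mhom_ext; symmetry; exact: cliff_clifford. Qed.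
End Clifford.
End Sign.
Arguments cliff : simpl never.

Section TwistEquivalence.
Local Notation T := (tens 1 A).
Local Notation HT := (tens_phi 1 HA).
Local Notation D := (revC (ct C)).

Lemma cliff_hom_ct_ok (M : smodule T) : ct_ok (C := C) (cliff_hom M).
Proof.
by split; [apply: cliff_hom_iso; rewrite mulr1 | rewrite cliff_hom_sq hscale1].
Qed.

Definition res_ct_ob (M : smodule T) : Ob D :=
  existT _ (res M) (exist _ (cliff_hom M) (cliff_hom_ct_ok M)).

Definition res_ct_hom (M N : smodule T) (f : mhom M N) :
  Defs.Hom D (res_ct_ob M) (res_ct_ob N).
Proof. by exists (res_hom f); mhom_ext; exact: mhom_cliff. Defined.

Definition res_ct_alpha (M : smodule T) :
  Defs.Hom D (res_ct_ob (Pi_mod HT M)) (Pi (res_ct_ob M)).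
Proof. by exists (cliff_alpha M); mhom_ext; rewrite cliff_Pi cliffN scaleN1r. Defined.

Definition res_ct_alpha_inv (M : smodule T) :
  Defs.Hom D (Pi (res_ct_ob M)) (res_ct_ob (Pi_mod HT M)).
Proof.
by exists (scaled_cliff_alpha M); mhom_ext; rewrite cliff_Pi !scale1r cliffZ scaleN1r.
Defined.

Lemma res_ct_superequiv : superequivalent (ModCat HT) D.
Proof.
exists res_ct_ob, res_ct_hom, res_ct_alpha; split.
- by move=> X; sub_mhom_ext.
- by move=> X Y Z g f; sub_mhom_ext.
- by move=> X Y f g; sub_mhom_ext.
- by move=> X Y c f; sub_mhom_ext.
- by move=> X Y f; sub_mhom_ext; rewrite mhom_cliff.
- by move=> X; exists (res_ct_alpha_inv X); split; sub_mhom_ext;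
    rewrite ?cliff_Pi scale1r ?cliffN cliff_cliff ?opprK scale1r.
- by move=> X; sub_mhom_ext; rewrite cliff_Pi cliffN cliff_cliff scale1r scaleN1r opprK.
- by move=> X Y f g e; apply: sig_ext; exact: (f_equal (fun h => sval (sval h)) e).
- by move=> X Y h; exists (lift_hom (ct_hom_cliff (proj2_sig h))); sub_mhom_ext.
- move=> [N [p [? hpp]]].
  have pp x : proj1_sig p (proj1_sig p x) = 1 *: x.
    by rewrite scale1r; have := f_equal (fun m => proj1_sig m x) hpp.
  exists (clifford_mod pp).
  exists (exist _ (res_clifford_to pp) (res_clifford_to_cliff pp)).
  exists (exist _ (res_clifford_from pp) (res_clifford_from_cliff pp)).
  by split; sub_mhom_ext.
Qed.
End TwistEquivalence.

Section ReversedTwistEquivalence.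
Local Notation T := (tens (-1) A).
Local Notation HT := (tens_phi (-1) HA).
Local Notation D := (ct (revC C)).

Lemma cliff_hom_ctrev_ok (M : smodule T) : ct_ok (C := revC C) (cliff_hom M).
Proof. by split; [apply: cliff_hom_iso; rewrite mulrNN mulr1 | exact: cliff_hom_sq]. Qed.

Definition res_ctrev_ob (M : smodule T) : Ob D :=
  existT _ (res M) (exist _ (cliff_hom M) (cliff_hom_ctrev_ok M)).

Definition res_ctrev_hom (M N : smodule T) (f : mhom M N) :
  Defs.Hom D (res_ctrev_ob M) (res_ctrev_ob N).
Proof. by exists (res_hom f); mhom_ext; exact: mhom_cliff. Defined.

Definition res_ctrev_alpha (M : smodule T) :
  Defs.Hom D (res_ctrev_ob (Pi_mod HT M)) (Pi (res_ctrev_ob M)).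
Proof. by exists (cliff_alpha M); mhom_ext; rewrite cliff_Pi cliffN scaleN1r. Defined.

Definition res_ctrev_alpha_inv (M : smodule T) :
  Defs.Hom D (Pi (res_ctrev_ob M)) (res_ctrev_ob (Pi_mod HT M)).
Proof.
by exists (scaled_cliff_alpha M); mhom_ext; rewrite cliff_Pi !cliffZ !scaleN1r.
Defined.

Lemma res_ctrev_superequiv : superequivalent (ModCat HT) D.
Proof.
exists res_ctrev_ob, res_ctrev_hom, res_ctrev_alpha; split.
- by move=> X; sub_mhom_ext.
- by move=> X Y Z g f; sub_mhom_ext.
- by move=> X Y f g; sub_mhom_ext.
- by move=> X Y c f; sub_mhom_ext.
- by move=> X Y f; sub_mhom_ext; rewrite mhom_cliff.
- by move=> X; exists (res_ctrev_alpha_inv X); split; sub_mhom_ext;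
    rewrite ?cliffZ cliff_cliff scalerA mulrNN mulr1 scale1r.
- by move=> X; sub_mhom_ext; rewrite cliff_Pi cliffN cliff_cliff scaleN1r opprK.
- by move=> X Y f g e; apply: sig_ext; exact: (f_equal (fun h => sval (sval h)) e).
- by move=> X Y h; exists (lift_hom (ct_hom_cliff (proj2_sig h))); sub_mhom_ext.
- move=> [N [p [? hpp]]].
  have pp x : proj1_sig p (proj1_sig p x) = -1 *: x.
    by have := f_equal (fun m => proj1_sig m x) hpp.
  exists (clifford_mod pp).
  exists (exist _ (res_clifford_to pp) (res_clifford_to_cliff pp)).
  exists (exist _ (res_clifford_from pp) (res_clifford_from_cliff pp)).
  by split; sub_mhom_ext.
Qed.
End ReversedTwistEquivalence.

Section Parity.
Variable Y : supmod A.
Local Notation ev := (su_ev (s := Y)).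
Local Notation od := (su_od (s := Y)).

Definition parity (x : Y) : Y := ev x - od x.

Lemma parity_even (y : Y) : ev y = y -> parity y = y.
Proof.
case: (su_ax Y) => _ _ _ _ _ _ _ _ od_ev _ _ _ _ e.
by rewrite /parity e; have := od_ev y; rewrite e => ->; rewrite subr0.
Qed.

Lemma parity_odd (y : Y) : od y = y -> parity y = - y.
Proof.
case: (su_ax Y) => _ _ _ _ _ _ _ ev_od _ _ _ _ _ e.
by rewrite /parity e; have := ev_od y; rewrite e => ->; rewrite sub0r.
Qed.

Lemma parityD (x y : Y) : parity (x + y) = parity x + parity y.
Proof.
by case: (su_ax Y) => evD _ odD *; rewrite /parity evD odD opprD addrACA.
Qed.

Lemma parityZ c (x : Y) : parity (c *: x) = c *: parity x.
Proof. by case: (su_ax Y) => _ evZ _ odZ *; rewrite /parity evZ odZ scalerBr. Qed.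

Lemma parity_act a (x : Y) : parity (sm_act a x) = sm_act (sphi a) (parity x).
Proof.
have [aD _ aDr _ _ _] := sm_ax Y.
case: (su_ax Y) => _ _ _ _ evod _ _ _ _ a00 a01 a10 a11.
rewrite -{1}(sa_evod HA a) -{1}(evod x) aD !aDr !parityD.
rewrite (parity_even (a00 _ _)) (parity_odd (a01 _ _)) (parity_odd (a10 _ _)).
rewrite (parity_even (a11 _ _)) /parity /sphi !aD !actNl !actNr opprK.
by rewrite addrACA.
Qed.

Lemma parityK (x : Y) : parity (parity x) = 1 *: x.
Proof.
case: (su_ax Y) => _ _ _ _ evod evev odod _ _ _ _ _ _.
rewrite scale1r {2}/parity parityD -scaleN1r parityZ scaleN1r.
by rewrite (parity_even (evev x)) (parity_odd (odod x)) opprK evod.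
Qed.

Definition parity_hom : mhom (Pi_mod HP Y) Y.
Proof.
exists parity; split; [exact: parityD | exact: parityZ |].
by move=> a x; rewrite /= parity_act (sphiK HA).
Defined.

Definition parity_mod : smodule (tens 1 A) := @clifford_mod 1 Y parity_hom parityK.
End Parity.

Section GradedEquivalence.
Variables (i : k) (hi : i * 2%:R = 1).
Local Notation T := (tens 1 A).
Local Notation HT := (tens_phi 1 HA).
Local Notation D := (ModSuperCat HA).

Lemma scale_half_double (V : lmodType k) (x : V) : i *: (x + x) = x.
Proof. by rewrite -mulr2n -scaler_nat scalerA hi scale1r. Qed.

Section Eigenspaces.
Variable M : smodule T.

Definition cliff_ev (x : M) : M := i *: (x + cliff x).
Definition cliff_od (x : M) : M := i *: (x - cliff x).

Lemma cliffK (x : M) : cliff (cliff x) = x.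
Proof. by rewrite cliff_cliff scale1r. Qed.

Lemma cliff_fixed_projs (y : M) : cliff y = y -> cliff_ev y = y /\ cliff_od y = 0.
Proof. by move=> e; rewrite /cliff_ev /cliff_od e scale_half_double subrr scaler0. Qed.

Lemma cliff_anti_projs (y : M) : cliff y = - y -> cliff_ev y = 0 /\ cliff_od y = y.
Proof. by move=> e; rewrite /cliff_ev /cliff_od e subrr opprK scale_half_double scaler0. Qed.

Lemma cliff_ev_fixed (x : M) : cliff (cliff_ev x) = cliff_ev x.
Proof. by rewrite /cliff_ev cliffZ cliffD cliffK addrC. Qed.

Lemma cliff_od_anti (x : M) : cliff (cliff_od x) = - cliff_od x.
Proof. by rewrite /cliff_od cliffZ cliffD cliffN cliffK -scalerN opprB addrC. Qed.

Lemma cliff_evod (x : M) : cliff_ev x + cliff_od x = x.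
Proof. by rewrite /cliff_ev /cliff_od -scalerDr addrACA subrr addr0 scale_half_double. Qed.

Lemma cliff_evBod (x : M) : cliff x = cliff_ev x - cliff_od x.
Proof.
rewrite /cliff_ev /cliff_od -scalerBr opprB [cliff x - x]addrC addrACA subrr add0r.
by rewrite scale_half_double.
Qed.

Lemma cliff_of_ev_fixed (y : M) : cliff_ev y = y -> cliff y = y.
Proof. by move=> e; rewrite -e cliff_ev_fixed. Qed.

Lemma cliff_of_od_fixed (y : M) : cliff_od y = y -> cliff y = - y.
Proof. by move=> e; rewrite -e cliff_od_anti. Qed.

Lemma cliff_res_act_ev a (x : M) :
  cliff (res_act (sa_ev a) x) = res_act (sa_ev a) (cliff x).
Proof. by rewrite cliff_res_act (sphi_ev HA). Qed.

Lemma cliff_res_act_od a (x : M) :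
  cliff (res_act (sa_od a) x) = - res_act (sa_od a) (cliff x).
Proof. by rewrite cliff_res_act (sphi_od HA) res_actNl. Qed.

Lemma res_supmod : @is_supmod k A (res M) cliff_ev cliff_od.
Proof.
split=> [x y|c x|x y|c x|x|x|x|x|x|a x|a x|a x|a x] /=.
- by rewrite /cliff_ev cliffD addrACA scalerDr.
- by rewrite /cliff_ev cliffZ -scalerDr !scalerA mulrC.
- by rewrite /cliff_od cliffD opprD addrACA scalerDr.
- by rewrite /cliff_od cliffZ -scalerBr !scalerA mulrC.
- exact: cliff_evod.
- by case: (cliff_fixed_projs (cliff_ev_fixed x)).
- by case: (cliff_anti_projs (cliff_od_anti x)).
- by case: (cliff_anti_projs (cliff_od_anti x)).
- by case: (cliff_fixed_projs (cliff_ev_fixed x)).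
- have [] // := @cliff_fixed_projs (res_act (sa_ev a) (cliff_ev x)).
  by rewrite cliff_res_act_ev cliff_ev_fixed.
- have [] // := @cliff_anti_projs (res_act (sa_ev a) (cliff_od x)).
  by rewrite cliff_res_act_ev cliff_od_anti res_actNr.
- have [] // := @cliff_anti_projs (res_act (sa_od a) (cliff_ev x)).
  by rewrite cliff_res_act_od cliff_ev_fixed.
- have [] // := @cliff_fixed_projs (res_act (sa_od a) (cliff_od x)).
  by rewrite cliff_res_act_od cliff_od_anti res_actNr opprK.
Qed.

Definition res_graded : supmod A := SupMod res_supmod.
End Eigenspaces.

Lemma cliff_ev_Pi (M : smodule T) (x : M) : cliff_ev (M := Pi_mod HT M) x = cliff_od x.
Proof. by rewrite /cliff_ev /cliff_od cliff_Pi. Qed.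

Lemma cliff_od_Pi (M : smodule T) (x : M) : cliff_od (M := Pi_mod HT M) x = cliff_ev x.
Proof. by rewrite /cliff_ev /cliff_od cliff_Pi opprK. Qed.

Lemma mhom_cliff_ev (M N : smodule T) (f : mhom M N) x :
  proj1_sig f (cliff_ev x) = cliff_ev (proj1_sig f x).
Proof. by case: (proj2_sig f) => fD fZ _; rewrite /cliff_ev fZ fD mhom_cliff. Qed.

Lemma mhom_cliff_od (M N : smodule T) (f : mhom M N) x :
  proj1_sig f (cliff_od x) = cliff_od (proj1_sig f x).
Proof.
case: (proj2_sig f) => fD fZ _.
by rewrite /cliff_od fZ fD -mhom_cliff -scaleN1r fZ scaleN1r.
Qed.

Lemma even_hom_cliff (M N : smodule T) (g : shom (res_graded M) (res_graded N)) x :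
  proj1_sig (proj1_sig g) (cliff x) = cliff (proj1_sig (proj1_sig g) x).
Proof.
case: g => [[g gP] [g_ev g_od]] /=; have [gD gZ _] := gP.
have gN y : g (- y) = - g y by rewrite -scaleN1r gZ scaleN1r.
have [ev_x _] := cliff_fixed_projs (cliff_ev_fixed x).
have [_ od_x] := cliff_anti_projs (cliff_od_anti x).
rewrite -{2}(cliff_evod x) gD cliffD.
rewrite (cliff_of_ev_fixed (g_ev _ ev_x)) (cliff_of_od_fixed (g_od _ od_x)).
by rewrite cliff_evBod gD gN.
Qed.

Definition res_graded_hom (M N : smodule T) (f : mhom M N) :
  Defs.Hom D (res_graded M) (res_graded N).
Proof.
by exists (res_hom f); split=> x /= e; [rewrite -mhom_cliff_ev e | rewrite -mhom_cliff_od e].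
Defined.

Definition res_Pi_to (M : smodule T) : mhom (res (Pi_mod HT M)) (Pi_mod HP (res M)).
Proof. by exists id; split=> // b x; exact: res_act_Pi. Defined.

Definition res_Pi_from (M : smodule T) : mhom (Pi_mod HP (res M)) (res (Pi_mod HT M)).
Proof. by exists id; split=> // b x; symmetry; exact: res_act_Pi. Defined.

Definition res_graded_alpha (M : smodule T) :
  Defs.Hom D (res_graded (Pi_mod HT M)) (Pi (s := D) (res_graded M)).
Proof.
by exists (res_Pi_to M); split=> x /= e; [rewrite -cliff_ev_Pi | rewrite -cliff_od_Pi].
Defined.

Definition res_graded_alpha_inv (M : smodule T) :
  Defs.Hom D (Pi (s := D) (res_graded M)) (res_graded (Pi_mod HT M)).
Proof.
by exists (res_Pi_from M); split=> x /= e; [rewrite cliff_ev_Pi | rewrite cliff_od_Pi].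
Defined.

Section FromSupermodule.
Variable Y : supmod A.

Lemma cliff_ev_clifford (y : parity_mod Y) : cliff_ev y = su_ev (s := Y) y.
Proof.
rewrite /cliff_ev cliff_clifford /= /parity.
case: (su_ax Y) => _ _ _ _ evod *.
by rewrite -{1}(evod y) addrACA subrr addr0 scale_half_double.
Qed.

Lemma cliff_od_clifford (y : parity_mod Y) : cliff_od y = su_od (s := Y) y.
Proof.
rewrite /cliff_od cliff_clifford /= /parity.
case: (su_ax Y) => _ _ _ _ evod *.
by rewrite -{1}(evod y) opprB [su_od y - _]addrC addrACA subrr add0r scale_half_double.
Qed.

Definition graded_clifford_to : Defs.Hom D (res_graded (parity_mod Y)) Y.
Proof.
exists (@res_clifford_to 1 Y (parity_hom Y) (@parityK Y)).
by split=> y /= e; [rewrite -cliff_ev_clifford | rewrite -cliff_od_clifford].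
Defined.

Definition graded_clifford_from : Defs.Hom D Y (res_graded (parity_mod Y)).
Proof.
exists (@res_clifford_from 1 Y (parity_hom Y) (@parityK Y)).
by split=> y /= e; [rewrite cliff_ev_clifford | rewrite cliff_od_clifford].
Defined.
End FromSupermodule.

Lemma res_graded_superequiv : superequivalent (ModCat HT) D.
Proof.
exists res_graded, res_graded_hom, res_graded_alpha; split.
- by move=> X; sub_mhom_ext.
- by move=> X Y Z g f; sub_mhom_ext.
- by move=> X Y f g; sub_mhom_ext.
- by move=> X Y c f; sub_mhom_ext.
- by move=> X Y f; sub_mhom_ext.
- by move=> X; exists (res_graded_alpha_inv X); split; sub_mhom_ext.
- by move=> X; sub_mhom_ext.
- by move=> X Y f g e; apply: sig_ext; exact: (f_equal (fun h => sval (sval h)) e).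
- by move=> X Y g; exists (lift_hom (even_hom_cliff g)); sub_mhom_ext.
- move=> Y; exists (parity_mod Y), (graded_clifford_to Y).
  by exists (graded_clifford_from Y); split; sub_mhom_ext.
Qed.
End GradedEquivalence.
End CliffordModules.

Theorem mainTheorem13 (k : comPzRingType) (two_unit : exists i : k, i * 2%:R = 1)
  (A : superAlg k) (HA : is_superalg A) :
  superequivalent (ModCat (tens_phi 1 HA)) (revC (ct (ModCat (sa_phi HA))))
  /\ superequivalent (ModCat (tens_phi 1 HA)) (ModSuperCat HA)
  /\ superequivalent (ModCat (tens_phi (-1) HA)) (ct (revC (ModCat (sa_phi HA)))).
Proof.
have [i hi] := two_unit.
split; first exact: res_ct_superequiv.
split; first exact: (res_graded_superequiv HA hi).
exact: res_ctrev_superequiv.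
Qed.
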